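(* Let $\mathrm{f}$ be a chief factor function, $G$ a finite group, $K\trianglelefteq G$, and $H/T$ a chief factor of $G$ with $K\le T$. Define normal subgroups $Z_1\le Z_2$ of $G$ containing $K$ by $Z_1/K=\mathrm{Z}(G/K,\mathrm{f})\cap T/K$ and $Z_2/K=\mathrm{Z}(G/K,\mathrm{f})\cap H/K$. Then $Z_2\ne Z_1$ if and only if $\mathrm{f}(H/T,G)=1$ and there exists $Z\trianglelefteq G$ with $Z_1\le Z$ such that $H/Z_1=T/Z_1\times Z/Z_1$. Moreover, in this case $Z_2=Z$.
   Context: A chief factor function is a function $\mathrm{f}$ assigning $0$ or $1$ to every pair $(H/K,G)$ with $G$ a finite group and $H/K$ a chief factor of $G$, such that: (1) $\mathrm{f}(H/K,G)=\mathrm{f}(M/N,G)$ whenever $H/K$ and $M/N$ are $G$-isomorphic chief factors of $G$; (2) $\mathrm{f}(H/K,G)=\mathrm{f}((H/N)/(K/N),G/N)$ for every $N\trianglelefteq G$ with $N\le K$. $\mathrm{Z}(G,\mathrm{f})$ denotes the greatest normal subgroup of $G$ such that $\mathrm{f}(H/K,G)=1$ for every chief factor $H/K$ of $G$ with $H\le \mathrm{Z}(G,\mathrm{f})$. *)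

From mathcomp Require Import all_boot all_fingroup all_solvable.
Set Implicit Arguments. Unset Strict Implicit. Unset Printing Implicit Defensive.
Import GroupScope.
Local Open Scope group_scope.

(* A raw chief factor function: [cff gT H K G] is the value f(H/K, G)
   (only meaningful when H/K is a chief factor of G). *)
Definition cff_raw := forall gT : finGroupType, {set gT} -> {set gT} -> {set gT} -> bool.

Definition Giso_chief (gT : finGroupType) (G H K M N : {group gT}) : Prop :=
  exists phi : {morphism H / K >-> coset_of N},
    isom (H / K) (M / N) phi /\
    forall g, g \in G -> forall x, x \in H / K ->
      phi (x ^ coset K g) = phi x ^ coset N g.

Unset Implicit Arguments.
Record chief_factor_function := ChiefFactorFunction {
  cff : cff_raw;
  cff_iso : forall (gT : finGroupType) (G H K M N : {group gT}),
    chief_factor G K H -> chief_factor G N M -> Giso_chief G H K M N ->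
    cff gT H K G = cff gT M N G;
  cff_quo : forall (gT : finGroupType) (G H K N : {group gT}),
    chief_factor G K H -> N <| G -> N \subset K ->
    cff gT H K G = cff (coset_of N) (H / N) (K / N) (G / N)
}.

Set Implicit Arguments.
Arguments cff f gT _ _ _ : rename.

Definition f_all_below (f : chief_factor_function) (gT : finGroupType)
    (G N : {set gT}) : bool :=
  [forall H : {group gT}, forall K : {group gT},
     (chief_factor G K H && (H \subset N)) ==> cff f gT H K G].

(* Z(G, f): the greatest such normal subgroup, realised as the subgroup
   generated by all of them. *)
Definition Zf (f : chief_factor_function) (gT : finGroupType) (G : {set gT})
    : {set gT} :=
  << \bigcup_(N : {group gT} | (N <| G) && f_all_below f G N) N >>.

From mathcomp Require Import all_boot all_fingroup all_solvable.
Import GroupScope.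
Local Open Scope group_scope.

Set Implicit Arguments. Unset Strict Implicit. Unset Printing Implicit Defensive.

(* Z(G,f) is the largest normal subgroup all of whose G-chief factors have
   f = 1: the join of two such subgroups N1, N2 is again one, because by the
   second isomorphism theorem every chief factor of G below N1 N2 is
   G-isomorphic to one below N1 or to one between N1 :&: N2 and N2.
   In the theorem Z2 :&: T = Z1, so if Z2 <> Z1 then T Z2 = H and Z2/Z1 is
   G-isomorphic to H/T; this gives f(H/T) = f(Z2/Z1) = 1 and the direct
   decomposition. Conversely a complement Z/Z1 is G-isomorphic to H/T, so
   f(Z/Z1) = 1 and Z/K lies in Z(G/K,f); hence Z <= Z2, and Dedekind's law
   gives Z2 = Z (Z2 :&: T) = Z. *)

Section ChiefFactors.
Variable gT : finGroupType.
Implicit Types G H K N T X Y Z A B C : {group gT}.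

Lemma normal_norms G X Y : X <| G -> Y <| G -> X \subset 'N(Y).
Proof. by move=> nsXG nsYG; apply: subset_trans (normal_sub nsXG) (normal_norm nsYG). Qed.

Lemma quotient_dprod_normalP G N T Z H :
    N <| G -> T <| G -> Z <| G -> H <| G -> N \subset T -> N \subset Z -> N \subset H ->
  (T / N) \x (Z / N) = H / N <-> T :&: Z = N /\ T * Z = H.
Proof.
move=> nsNG nsTG nsZG nsHG sNT sNZ sNH.
have nNT := normal_norms nsTG nsNG; have nNZ := normal_norms nsZG nsNG.
have defTZ : T <*> Z = T * Z := norm_joinEr (normal_norms nsZG nsTG).
split=> [/dprodP [_ defH _ trTZ] | [meetTZ defH]].
  have meetTZ : T :&: Z = N.
    apply/eqP; rewrite eqEsubset subsetI sNT sNZ !andbT.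
    by rewrite -quotient_sub1 ?subIset ?nNT // quotientGI // trTZ.
  split=> //; rewrite -defTZ; apply: (quotient_inj (H := N)).
  - exact: normalS (subset_trans sNT (joing_subl T Z)) (normal_sub (normalY nsTG nsZG)) nsNG.
  - exact: normalS sNH (normal_sub nsHG) nsNG.
  by rewrite /= defTZ quotientMl.
have cTZ : Z / N \subset 'C(T / N).
  apply: quotient_cents2r; rewrite -meetTZ setIC.
  by apply: commg_subI; rewrite subsetI subxx ?(normal_norms nsZG nsTG) ?(normal_norms nsTG nsZG).
by rewrite dprodE // -?quotientMl -?quotientGI ?defH ?meetTZ ?trivg_quotient.
Qed.

Lemma chief_factorP G K H : chief_factor G K H <->
  [/\ H <| G, K <| G, K \proper H &
      forall X, X <| G -> K \subset X -> X \subset H -> X :=: K \/ X :=: H].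
Proof.
rewrite /chief_factor /maxnormal; split.
  case/andP => /maxgroupP [/andP [pKH nKG] maxK] nsHG.
  have sKG : K \subset G := subset_trans (proper_sub pKH) (normal_sub nsHG).
  split; rewrite /normal ?sKG // => X nsXG sKX sXH.
  have [->|neXH] := eqVneq X H; [by right | left].
  by apply: maxK; rewrite ?properEneq ?neXH ?sXH ?(normal_norm nsXG).
case=> nsHG nsKG pKH maxK; rewrite nsHG andbT; apply/maxgroupP.
split=> [|X /andP [pXH nXG] sKX]; first by rewrite pKH (normal_norm nsKG).
have nsXG : X <| G by rewrite /normal nXG (subset_trans (proper_sub pXH)) ?normal_sub.
have [//|eXH] := maxK X nsXG sKX (proper_sub pXH).
by move: pXH; rewrite eXH properxx.
Qed.

Lemma chief_factor_normal G K H : chief_factor G K H -> H <| G /\ K <| G.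
Proof. by case/chief_factorP. Qed.

Lemma chief_factor_sub G K H : chief_factor G K H -> K \subset H.
Proof. by case/chief_factorP => _ _ /proper_sub. Qed.

Lemma chief_factor_nested_eq G K H B A :
  chief_factor G K H -> chief_factor G B A -> K \subset B -> A \subset H ->
  A :=: H /\ B :=: K.
Proof.
case/chief_factorP => _ _ pKH maxK /chief_factorP [nsAG nsBG pBA _] sKB sAH.
have sBA := proper_sub pBA.
have eAH : A :=: H.
  have [eAK|//] := maxK A nsAG (subset_trans sKB sBA) sAH.
  by move: pBA; rewrite eAK => /proper_sub_trans/(_ sKB); rewrite properxx.
split=> //; have [//|eBH] := maxK B nsBG sKB (subset_trans sBA sAH).
by move: pBA; rewrite eBH eAH properxx.
Qed.

Lemma chief_factor_mul G T H N : chief_factor G T H -> N <| G -> N \subset H ->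
  ~~ (N \subset T) -> T * N = H.
Proof.
case/chief_factorP => nsHG nsTG pTH maxT nsNG sNH sNT'.
rewrite -norm_joinEr ?(normal_norms nsNG nsTG) //.
have sTNH : T <*> N \subset H by rewrite join_subG proper_sub.
case: (maxT _ (normalY nsTG nsNG) (joing_subl T N) sTNH) => // eTN.
by case/negP: sNT'; rewrite -eTN joing_subr.
Qed.

Section SecondIsomorphism.
Variables G A B C : {group gT}.
Hypotheses (nsAG : A <| G) (nsBG : B <| G) (nsCG : C <| G) (defA : C * B = A).

Let sBA : B \subset A. Proof. by rewrite -defA mulG_subr. Qed.
Let sCA : C \subset A. Proof. by rewrite -defA mulG_subl. Qed.

Lemma chief_factor_meet_of_mul : chief_factor G B A -> chief_factor G (B :&: C) C.
Proof.
case/chief_factorP => _ _ pBA maxB; apply/chief_factorP; split; rewrite ?normalI //.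
  rewrite properEneq subsetIr andbT; apply: contraTneq pBA => eBC.
  by rewrite -defA mulSGid ?properxx // -eBC subsetIl.
move=> X nsXG sBCX sXC.
have nBX : X \subset 'N(B) := normal_norms nsXG nsBG.
have sXBA : X <*> B \subset A by rewrite join_subG sBA (subset_trans sXC sCA).
case: (maxB _ (normalY nsXG nsBG) (joing_subr X B) sXBA) => /= eXB; [left | right].
  apply/eqP; rewrite eqEsubset sBCX andbT subsetI sXC andbT.
  by rewrite -eXB joing_subl.
have := group_modl B sXC.
rewrite (mulGSid sBCX) -(norm_joinEl nBX) eXB -defA => ->.
by apply/setIidPr; rewrite mulG_subl.
Qed.

Lemma chief_factor_mul_of_meet : chief_factor G (B :&: C) C -> chief_factor G B A.
Proof.
case/chief_factorP => _ _ pBCC maxBC; apply/chief_factorP; split=> //.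
  rewrite properEneq sBA andbT; apply: contraTneq pBCC => eBA.
  by rewrite /= eBA (setIidPr sCA) properxx.
move=> X nsXG sBX sXA.
have sBCXC : B :&: C \subset X :&: C := setSI C sBX.
case: (maxBC _ (normalI nsXG nsCG) sBCXC (subsetIr X C)) => /= eXC; [left | right].
  apply/eqP; rewrite eqEsubset sBX andbT.
  have := group_modr C sBX; rewrite eXC (mulSGid (subsetIl B C)) defA => ->.
  by rewrite subsetI subxx sXA.
by apply/eqP; rewrite eqEsubset sXA -defA mul_subG // -eXC subsetIl.
Qed.

Lemma Giso_chief_second_isom : Giso_chief G C (B :&: C) A B.
Proof.
have nBC : C \subset 'N(B) := normal_norms nsCG nsBG.
have nBCG : G \subset 'N(B :&: C) := normal_norm (normalI nsBG nsCG).
have [phi injphi imphi] := second_isom nBC.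
have phiE y : y \in C -> phi (coset (B :&: C) y) = coset B y.
  move=> Cy; have NBCy : y \in 'N(B :&: C).
    exact: subsetP nBCG y (subsetP (normal_sub nsCG) y Cy).
  have := imphi [set y]; rewrite sub1set Cy quotient_set1 // morphim_set1.
    by rewrite quotient_set1 ?(subsetP nBC) // => /(_ isT) /set1_inj.
  exact: mem_quotient.
exists phi; split.
  by apply/isomP; rewrite injphi imphi //= -defA quotientMidr.
move=> g Gg _ /morphimP [c Nc Cc ->].
have Ccg : c ^ g \in C by rewrite memJ_norm // (subsetP (normal_norm nsCG)).
have NBCg : g \in 'N(B :&: C) := subsetP nBCG g Gg.
have NBg : g \in 'N(B) := subsetP (normal_norm nsBG) g Gg.
have NBc : c \in 'N(B) := subsetP nBC c Cc.
by rewrite -morphJ // phiE // phiE // morphJ.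
Qed.

End SecondIsomorphism.

End ChiefFactors.

Lemma chief_factor_quotient (gT : finGroupType) (G K H N : {group gT}) :
  chief_factor G K H -> N <| G -> N \subset K -> chief_factor (G / N) (K / N) (H / N).
Proof.
move=> /chief_factorP [nsHG nsKG pKH maxK] nsNG sNK.
have sKH := proper_sub pKH.
have nsNK : N <| K := normalS sNK (normal_sub nsKG) nsNG.
have nsNH : N <| H := normalS (subset_trans sNK sKH) (normal_sub nsHG) nsNG.
apply/chief_factorP; split; rewrite ?quotient_normal ?quotient_proper //.
move=> X nsXG sKX sXH; set Y := (coset N @*^-1 X)%G.
have nsYG : Y <| G by rewrite -(quotientGK nsNG) cosetpre_normal.
have sKY : K \subset Y by rewrite -(quotientGK nsNK) cosetpreSK.
have sYH : Y \subset H by rewrite -(quotientGK nsNH) cosetpreSK.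
by case: (maxK Y nsYG sKY sYH) => /= eY; [left | right]; rewrite -(cosetpreK X) eY.
Qed.

Section ChiefFactorFunction.
Variables (f : chief_factor_function) (gT : finGroupType).
Implicit Types G H K L N X Y A B C : {group gT}.

Lemma cff_second_isom G A B C : A <| G -> B <| G -> C <| G -> C * B = A ->
  chief_factor G B A -> cff f gT A B G = cff f gT C (B :&: C) G.
Proof.
move=> nsAG nsBG nsCG defA chBA; symmetry.
apply: cff_iso; [exact: chief_factor_meet_of_mul chBA | exact: chBA |].
exact: Giso_chief_second_isom.
Qed.

Definition f_all_between (G L U : {set gT}) :=
  forall A B, chief_factor G B A -> L \subset B -> A \subset U -> cff f gT A B G.

Lemma chief_factor_meet G A B N : chief_factor G B A -> N <| G -> A \subset N <*> B ->
  chief_factor G (B :&: N) (A :&: N) /\ cff f gT A B G = cff f gT (A :&: N) (B :&: N) G.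
Proof.
move=> chBA nsNG sANB; have [nsAG nsBG] := chief_factor_normal chBA.
have sBA := chief_factor_sub chBA.
have defA : (A :&: N) * B = A.
  by rewrite group_modr // -(norm_joinEl (normal_norms nsNG nsBG)); apply/setIidPl.
have meetB : B :&: (A :&: N) = B :&: N by rewrite setIA (setIidPl sBA).
have nsANG := normalI nsAG nsNG.
rewrite -meetB; split; first exact: chief_factor_meet_of_mul chBA.
exact: cff_second_isom.
Qed.

Lemma chief_factor_join G A B N : chief_factor G B A -> N <| G -> ~~ (A \subset N <*> B) ->
  chief_factor G (B <*> N) (A <*> N) /\ cff f gT A B G = cff f gT (A <*> N) (B <*> N) G.
Proof.
move=> chBA nsNG nsANB; have [nsAG nsBG] := chief_factor_normal chBA.
have sBA := chief_factor_sub chBA.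
have nsBNG := normalY nsBG nsNG; have nsANG := normalY nsAG nsNG.
have meetA : (B <*> N) :&: A = B.
  have /chief_factorP [_ _ _ maxB] := chBA.
  have sBBNA : B \subset (B <*> N) :&: A by rewrite subsetI joing_subl.
  case: (maxB _ (normalI nsBNG nsAG) sBBNA (subsetIr _ _)) => // eA.
  by case/negP: nsANB; rewrite joingC -eA subsetIl.
have defAN : A * (B <*> N) = A <*> N.
  rewrite (norm_joinEl (normal_norms nsBG nsNG)) (norm_joinEl (normal_norms nsAG nsNG)).
  by rewrite mulgA (mulGSid sBA).
have chA : chief_factor G ((B <*> N) :&: A) A by rewrite meetA.
have chBNAN := chief_factor_mul_of_meet nsANG nsBNG nsAG defAN chA.
split=> //.
by rewrite (cff_second_isom nsANG nsBNG nsAG defAN chBNAN) meetA.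
Qed.

Lemma f_all_between_join G L N1 N2 : N1 <| G -> N2 <| G -> L \subset N1 ->
    f_all_between G L N1 -> f_all_between G (N1 :&: N2) N2 ->
  f_all_between G L (N1 <*> N2).
Proof.
move=> nsN1G nsN2G sLN1 fN1 fN2 A B chBA sLB sAN.
(* If A <= N1 B then A/B ~ (A :&: N1)/(B :&: N1), between L and N1; otherwise
   A/B ~ (A N1)/(B N1), whose intersection with N2 lies between N1 :&: N2 and N2. *)
have [sANB | nsANB] := boolP (A \subset N1 <*> B).
  have [chI ->] := chief_factor_meet chBA nsN1G sANB.
  by apply: fN1 chI _ (subsetIr A N1); rewrite subsetI sLB.
have [chJ ->] := chief_factor_join chBA nsN1G nsANB.
have sN1BN : N1 \subset N2 <*> (B <*> N1).
  exact: subset_trans (joing_subr B N1) (joing_subr N2 _).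
have sAN' : A <*> N1 \subset N2 <*> (B <*> N1).
  rewrite join_subG sN1BN andbT (subset_trans sAN) // join_subG sN1BN.
  exact: joing_subl.
have [chI ->] := chief_factor_meet chJ nsN2G sAN'.
apply: fN2 chI _ (subsetIr _ _); rewrite subsetI subsetIr andbT.
exact: subset_trans (subsetIl N1 N2) (joing_subr B N1).
Qed.

Lemma f_all_belowP G (N : {set gT}) : reflect (f_all_between G 1 N) (f_all_below f G N).
Proof.
apply: (iffP forallP) => [fN A B chBA _ sAN | fN A].
  by have /forallP/(_ B) := fN A; rewrite chBA sAN.
by apply/forallP => B; apply/implyP => /andP [chBA sAN]; apply: fN chBA (sub1G B) sAN.
Qed.

Fact Zf_group_set G : group_set (Zf f G).
Proof. exact: groupP. Qed.

Canonical Zf_group G := Group (Zf_group_set G).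

Lemma sub_Zf G N : N <| G -> f_all_below f G N -> N \subset Zf f G.
Proof. by move=> nsNG fN; apply: sub_gen; apply: (bigcup_sup N); rewrite nsNG. Qed.

Lemma Zf_maxgroup G M : [max M | (M <| G) && f_all_below f G M] -> Zf f G = M.
Proof.
case/maxgroupP => /andP [nsMG fM] maxM.
apply/eqP; rewrite eqEsubset sub_Zf // andbT gen_subG.
apply/bigcupsP => N /andP [nsNG fN].
have fMN : f_all_below f G (M <*> N).
  apply/f_all_belowP/f_all_between_join; rewrite ?sub1G //; first exact/f_all_belowP.
  by move=> A B chBA _; apply: (f_all_belowP _ _ fN) chBA (sub1G B).
by rewrite -(maxM (M <*> N)%G) ?normalY ?fMN ?joing_subl ?joing_subr.
Qed.

Lemma Zf_normal_all_below G : Zf f G <| G /\ f_all_between G 1 (Zf f G).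
Proof.
have f1 : (1%G <| G) && f_all_below f G 1.
  rewrite normal1; apply/f_all_belowP => A B /chief_factorP [_ _ pBA _] _ sA1.
  by have := proper_sub_trans pBA sA1; rewrite properE sub1G andbF.
have [M maxM _] := maxgroup_exists (gP := fun M => (M <| G) && f_all_below f G M) f1.
by rewrite (Zf_maxgroup maxM); case/maxgroupP: maxM => /andP [? /f_all_belowP].
Qed.

Lemma chief_factor_sub_Zf G X Y : chief_factor G X Y -> cff f gT Y X G ->
  X \subset Zf f G -> Y \subset Zf f G.
Proof.
move=> chXY fYX sXZ; have [nsZG fZ] := Zf_normal_all_below G.
have [nsYG _] := chief_factor_normal chXY.
have fZY : f_all_between G 1 (Zf f G <*> Y).
  apply: f_all_between_join (sub1G _) fZ _ => // A B chBA sZYB sAY.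
  have sXB : X \subset B.
    by apply: subset_trans sZYB; rewrite subsetI sXZ (chief_factor_sub chXY).
  by have [-> ->] := chief_factor_nested_eq chXY chBA sXB sAY.
apply: subset_trans (joing_subr (Zf f G) Y) _.
by apply: sub_Zf; [exact: normalY | exact/f_all_belowP].
Qed.

End ChiefFactorFunction.

Section ZfChiefFactor.
Variables (f : chief_factor_function) (gT : finGroupType) (G K H T Z1 Z2 : {group gT}).
Hypotheses (nsKG : K <| G) (chTH : chief_factor G T H) (sKT : K \subset T).
Hypotheses (nsZ1G : Z1 <| G) (sKZ1 : K \subset Z1).
Hypothesis defZ1 : Z1 / K = Zf f (G / K) :&: (T / K).
Hypotheses (nsZ2G : Z2 <| G) (sKZ2 : K \subset Z2).
Hypothesis defZ2 : Z2 / K = Zf f (G / K) :&: (H / K).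

Let nsHG : H <| G. Proof. by case: (chief_factor_normal chTH). Qed.
Let nsTG : T <| G. Proof. by case: (chief_factor_normal chTH). Qed.
Let sTH : T \subset H. Proof. exact: chief_factor_sub chTH. Qed.

Let nsK (X : {group gT}) : X <| G -> K \subset X -> K <| X.
Proof. by move=> nsXG sKX; apply: normalS sKX (normal_sub nsXG) nsKG. Qed.

Lemma Zf_top_meet : Z2 :&: T = Z1.
Proof.
apply: (quotient_inj (H := K)); rewrite ?nsK ?normalI ?subsetI ?sKZ2 //=.
by rewrite quotientIG // defZ2 -setIA (setIidPr (quotientS K sTH)).
Qed.

Lemma Zf_top_sub : Z2 \subset H.
Proof.
by rewrite -(quotientSGK (normal_norms nsZ2G nsKG) (subset_trans sKT sTH)) defZ2 subsetIr.
Qed.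

Let sZ1T : Z1 \subset T. Proof. by rewrite -Zf_top_meet subsetIr. Qed.

Lemma Zf_top_dprod : Z2 :!=: Z1 -> cff f gT H T G /\ (T / Z1) \x (Z2 / Z1) = H / Z1.
Proof.
move=> neZ21.
have defH : T * Z2 = H.
  apply: chief_factor_mul chTH nsZ2G Zf_top_sub _; apply: contra neZ21 => sZ2T.
  by rewrite -Zf_top_meet (setIidPl sZ2T).
have defH' : Z2 * T = H by rewrite -defH (normC (normal_norms nsZ2G nsTG)).
have meetTZ2 : T :&: Z2 = Z1 by rewrite setIC Zf_top_meet.
have chZ2 : chief_factor G Z1 Z2.
  by rewrite -meetTZ2; exact: chief_factor_meet_of_mul chTH.
split; last first.
  apply/(quotient_dprod_normalP nsZ1G nsTG nsZ2G nsHG) => //.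
  - by rewrite -meetTZ2 subsetIr.
  - exact: subset_trans sZ1T sTH.
rewrite (cff_second_isom f nsHG nsTG nsZ2G defH' chTH) meetTZ2.
rewrite (@cff_quo f gT G Z2 Z1 K chZ2 nsKG sKZ1).
have [_ fZf] := Zf_normal_all_below f (G / K)%G.
apply: fZf (chief_factor_quotient chZ2 nsKG sKZ1) (sub1G _) _.
by rewrite /= defZ2 subsetIl.
Qed.

Lemma Zf_top_eq_complement (Z : {group gT}) : cff f gT H T G -> Z <| G -> Z1 \subset Z ->
  (T / Z1) \x (Z / Z1) = H / Z1 -> Z2 :=: Z.
Proof.
move=> fHT nsZG sZ1Z.
case/(quotient_dprod_normalP nsZ1G nsTG nsZG nsHG sZ1T sZ1Z (subset_trans sZ1T sTH)).
move=> meetTZ defH.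
have defH' : Z * T = H by rewrite -defH (normC (normal_norms nsZG nsTG)).
have chZ : chief_factor G Z1 Z.
  by rewrite -meetTZ; exact: chief_factor_meet_of_mul chTH.
have fZ : cff f gT Z Z1 G.
  by rewrite -meetTZ -(cff_second_isom f nsHG nsTG nsZG defH' chTH).
have sZKZf : Z / K \subset Zf f (G / K).
  apply: chief_factor_sub_Zf (chief_factor_quotient chZ nsKG sKZ1) _ _.
    by rewrite -(@cff_quo f gT G Z Z1 K chZ nsKG sKZ1).
  by rewrite /= defZ1 subsetIl.
have sZZ2 : Z \subset Z2.
  rewrite -(quotientSGK (normal_norms nsZG nsKG) sKZ2) defZ2 subsetI sZKZf.
  by rewrite quotientS // -defH mulG_subr.
have := group_modr T sZZ2.
by rewrite Zf_top_meet (mulSGid sZ1Z) defH (setIidPl Zf_top_sub) => ->.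
Qed.

Lemma complement_neq_Zf_bot (Z : {group gT}) : (T / Z1) \x (Z / Z1) = H / Z1 -> Z :!=: Z1.
Proof.
have nsZ1T : Z1 <| T := normalS sZ1T (normal_sub nsTG) nsZ1G.
have nsZ1H : Z1 <| H := normalS (subset_trans sZ1T sTH) (normal_sub nsHG) nsZ1G.
move=> dprodZ; apply/eqP => eZZ1; move: dprodZ.
rewrite eZZ1 trivg_quotient dprodg1 => /(quotient_inj nsZ1T nsZ1H) eTH.
by have /chief_factorP [_ _] := chTH; rewrite eTH properxx.
Qed.

Lemma Zf_top_neq_bot : (Z2 :!=: Z1) =
  cff f gT H T G &&
  [exists Z : {group gT}, [&& Z <| G, Z1 \subset Z & (T / Z1) \x (Z / Z1) == H / Z1]].
Proof.
apply/idP/andP => [neZ21 | [fHT /existsP [Z /and3P [nsZG sZ1Z /eqP dprodZ]]]].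
  have [fHT dprodZ2] := Zf_top_dprod neZ21.
  split=> //; apply/existsP; exists Z2.
  by rewrite nsZ2G dprodZ2 eqxx andbT -Zf_top_meet subsetIl.
by rewrite (Zf_top_eq_complement fHT nsZG sZ1Z dprodZ) complement_neq_Zf_bot.
Qed.

End ZfChiefFactor.

Theorem lemma2 (f : chief_factor_function) (gT : finGroupType)
    (G K H T Z1 Z2 : {group gT}) :
  K <| G -> chief_factor G T H -> K \subset T ->
  Z1 <| G -> K \subset Z1 -> Z1 / K = Zf f (G / K) :&: (T / K) ->
  Z2 <| G -> K \subset Z2 -> Z2 / K = Zf f (G / K) :&: (H / K) ->
  ((Z2 :!=: Z1) =
     (cff f gT H T G &&
      [exists Z : {group gT},
         [&& Z <| G, Z1 \subset Z & (T / Z1) \x (Z / Z1) == H / Z1]]))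
  /\ (forall Z : {group gT},
        cff f gT H T G -> Z <| G -> Z1 \subset Z -> (T / Z1) \x (Z / Z1) = H / Z1 ->
        Z2 :=: Z).
Proof.
move=> nsKG chTH sKT nsZ1G sKZ1 defZ1 nsZ2G sKZ2 defZ2.
split; first exact: Zf_top_neq_bot nsKG chTH sKT nsZ1G sKZ1 defZ1 nsZ2G sKZ2 defZ2.
exact: Zf_top_eq_complement nsKG chTH sKT nsZ1G sKZ1 defZ1 nsZ2G sKZ2 defZ2.
Qed.
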